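(* Let $p=P\langle x\rangle\to_{\mathrm{ue}}P\langle v^{\alpha}\rangle=q$ with $P\in\mathcal{X}_{{\mathcal{U}},{\mathcal{A}}}$ and $P(x)=v$. Then there exist a program $r$ and a reduction sequence $d: q\to_{\mathrm{ue}}^{k}\to_{\mathrm{um}} r$ such that: (1) the evaluation context of each $\to_{\mathrm{ue}}$ step in $d$ is in $\mathcal{X}_{{\mathcal{U}},{\mathcal{A}}}$, and the one of the $\to_{\mathrm{um}}$ step is in $\mathcal{M}_{{\mathcal{U}},{\mathcal{A}}}$; (2) $k\geq 0$ is the number of rules (NA) in the derivation of $P\in\mathcal{X}_{{\mathcal{U}},{\mathcal{A}}}$.
   Context: Syntax. Terms $t,u,s ::= x\mid\lambda x.t\mid t\,u$; values $v ::= \lambda x.t$ (variables are not values); environments $E ::= \epsilon\mid E[x\leftarrow t]$; programs $p ::= (t,E)$; $x$ is bound in $E$ and $u$ in $(u,E[x\leftarrow t])$; up to $\alpha$; appended ES bind variables not in the domain of the program/context. Inert terms $i ::= x\mid i\,f$, fireballs $f ::= v\mid i$, non-variable inert terms $i^{+} ::= i\,f$. Contexts. Open term evaluation contexts $\mathcal{H} ::= \langle\cdot\rangle\mid\mathcal{H}\,t\mid i\,\mathcal{H}$; applicative term contexts $\mathcal{H}^{@} ::= \langle\cdot\rangle\,t\mid\mathcal{H}^{@}\,t\mid i\,\mathcal{H}^{@}$. Term contexts $C ::= \langle\cdot\rangle\mid C\,t\mid t\,C$; environment contexts $G ::= E[x\leftarrow C]\mid G[x\leftarrow u]$; program contexts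 $P ::= (C,E)\mid(t,G)$. Appending: $(t,E)@[x\leftarrow u]=(t,E[x\leftarrow u])$, $(C,E)@[x\leftarrow u]=(C,E[x\leftarrow u])$, $(t,G)@[x\leftarrow u]=(t,G[x\leftarrow u])$, and $(t,E)@[x\leftarrow C]:=(t,E[x\leftarrow C])$. Plugging: $(C,E)\langle(t,E')\rangle=(C\langle t\rangle,E'E)$; $(u,E[x\leftarrow C])\langle(t,E')\rangle=(u,E[x\leftarrow C\langle t\rangle]E')$; $(u,G[x\leftarrow s])\langle(t,E)\rangle=((u,G)\langle(t,E)\rangle)@[x\leftarrow s]$; $P\langle t\rangle:=P\langle(t,\epsilon)\rangle$. Look-up $P(x)=t$ if the ES list of $P$ contains $[x\leftarrow t]$ with $t$ a term, $\bot$ otherwise. $v^{\alpha}$: copy of $v$ with fresh bound variables. Variable sets. $an(\lambda x.t)=an(x)=\emptyset$; $an(tu)=\{x\}\cup an(u)$ if $t=x$ variable, else $an(t)\cup an(u)$; $an(\langle\cdot\rangle)=\emptyset$, $an(\mathcal{H}\,t)=an(\mathcal{H})$, $an(i\,\mathcal{H})=an(i)\cup an(\mathcal{H})$. $un(\lambda x.t)=\emptyset$, $un(x)=\{x\}$, $un(tu)=un(u)$ if $t$ variable, else $un(t)\cup un(u)$; $un(\langle\cdot\rangle)=\emptyset$, $un(\mathcal{H}\,t)=un(\mathcal{H})$, $un(i\,\mathcal{H})=un(i)\cup un(\mathcal{H})$. $\mathrm{upd}(S,x,y):=S$ if $x\notin S$, else $(S\setminus\{x\})\cup\{y\}$. Multiplicative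 contexts $P\in\mathcal{M}_{{\mathcal{U}},{\mathcal{A}}}$, inductively: (ax) $(\mathcal{H},\epsilon)\in\mathcal{M}_{un(\mathcal{H}),an(\mathcal{H})}$; (var) $P\in\mathcal{M}_{{\mathcal{U}},{\mathcal{A}}}$, $x\in{\mathcal{U}}\cup{\mathcal{A}}$ $\Rightarrow$ $P@[x\leftarrow y]\in\mathcal{M}_{\mathrm{upd}({\mathcal{U}},x,y),\mathrm{upd}({\mathcal{A}},x,y)}$; (gc) $x\notin{\mathcal{U}}\cup{\mathcal{A}}$ $\Rightarrow$ $P@[x\leftarrow t]\in\mathcal{M}_{{\mathcal{U}},{\mathcal{A}}}$; (I) $x\in{\mathcal{U}}\cup{\mathcal{A}}$ $\Rightarrow$ $P@[x\leftarrow i^{+}]\in\mathcal{M}_{({\mathcal{U}}\setminus\{x\})\cup un(i^{+}),({\mathcal{A}}\setminus\{x\})\cup an(i^{+})}$; (U) $x\in{\mathcal{U}}\setminus{\mathcal{A}}$ $\Rightarrow$ $P@[x\leftarrow v]\in\mathcal{M}_{{\mathcal{U}}\setminus\{x\},{\mathcal{A}}}$; (her) $x\notin{\mathcal{U}}\cup{\mathcal{A}}$ $\Rightarrow$ $P\langle x\rangle@[x\leftarrow\mathcal{H}]\in\mathcal{M}_{{\mathcal{U}}\cup un(\mathcal{H}),{\mathcal{A}}\cup an(\mathcal{H})}$ (each with premise $P\in\mathcal{M}_{{\mathcal{U}},{\mathcal{A}}}$). Exponential contexts $P\in\mathcal{X}_{{\mathcal{U}},{\mathcal{A}}}$, inductively: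 (ax1) $(\mathcal{H}^{@},\epsilon)\in\mathcal{X}_{un(\mathcal{H}^{@}),an(\mathcal{H}^{@})}$; (ax2) $P\in\mathcal{M}_{{\mathcal{U}},{\mathcal{A}}}$, $x\notin{\mathcal{U}}\cup{\mathcal{A}}$ $\Rightarrow$ $P\langle x\rangle@[x\leftarrow\mathcal{H}^{@}]\in\mathcal{X}_{({\mathcal{U}}\setminus\{x\})\cup un(\mathcal{H}^{@}),{\mathcal{A}}\cup an(\mathcal{H}^{@})}$; and, each with premise $P\in\mathcal{X}_{{\mathcal{U}},{\mathcal{A}}}$: (var) $x\in{\mathcal{U}}\cup{\mathcal{A}}$ $\Rightarrow$ $P@[x\leftarrow y]\in\mathcal{X}_{\mathrm{upd}({\mathcal{U}},x,y),\mathrm{upd}({\mathcal{A}},x,y)}$; (I) $x\in{\mathcal{U}}\cup{\mathcal{A}}$ $\Rightarrow$ $P@[x\leftarrow i^{+}]\in\mathcal{X}_{({\mathcal{U}}\setminus\{x\})\cup un(i^{+}),({\mathcal{A}}\setminus\{x\})\cup an(i^{+})}$; (gc) $x\notin{\mathcal{U}}\cup{\mathcal{A}}$ $\Rightarrow$ $P@[x\leftarrow t]\in\mathcal{X}_{{\mathcal{U}},{\mathcal{A}}}$; (U) $x\in{\mathcal{U}}\setminus{\mathcal{A}}$ $\Rightarrow$ $P@[x\leftarrow v]\in\mathcal{X}_{{\mathcal{U}}\setminus\{x\},{\mathcal{A}}}$; (NA) $x\notin{\mathcal{A}}$ $\Rightarrow$ $P\langle x\rangle@[x\leftarrow\langle\cdot\rangle]\in\mathcal{X}_{{\mathcal{U}}\setminus\{x\},{\mathcal{A}}}$.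 Useful Open CbNeed rules: $P\langle(\lambda x.t)u\rangle\to_{\mathrm{um}}P\langle(t,[x\leftarrow u])\rangle$ if $P\in\mathcal{M}_{{\mathcal{U}},{\mathcal{A}}}$ for some ${\mathcal{U}},{\mathcal{A}}$; $P\langle x\rangle\to_{\mathrm{ue}}P\langle v^{\alpha}\rangle$ if $P\in\mathcal{X}_{{\mathcal{U}},{\mathcal{A}}}$ for some ${\mathcal{U}},{\mathcal{A}}$ and $P(x)=v$. *)

From mathcomp Require Import all_boot.
From mathcomp Require Import finmap.
From Stdlib Require List.

Set Implicit Arguments.
Unset Strict Implicit.
Unset Printing Implicit Defensive.

Local Open Scope fset_scope.

Inductive term : Type :=
| Var : nat -> term
| Lam : nat -> term -> term
| App : term -> term -> term.

Definition is_value (t : term) : Prop :=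
  match t with Lam _ _ => True | _ => False end.

Inductive inert : term -> Prop :=
| inert_var : forall x, inert (Var x)
| inert_app : forall i f, inert i -> fireball f -> inert (App i f)
with fireball : term -> Prop :=
| fb_val : forall x t, fireball (Lam x t)
| fb_inert : forall i, inert i -> fireball i.

Definition inert_plus (t : term) : Prop :=
  match t with App _ _ => inert t | _ => False end.

(* Environments E ::= eps | E[x<-t], represented left-to-right:
   E[x<-t] is  rcons E (x, t);  the concatenation E'E is  E' ++ E. *)
Definition env := seq (nat * term)%type.

Definition program := (term * env)%type.

Inductive dbterm : Type :=
| DFree : nat -> dbterm
| DBnd : nat -> dbterm
| DLam : dbterm -> dbterm
| DApp : dbterm -> dbterm -> dbterm.

Fixpoint db (ctx : seq nat) (t : term) : dbterm :=
  match t with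
  | Var x => if x \in ctx then DBnd (index x ctx) else DFree x
  | Lam x b => DLam (db (x :: ctx) b)
  | App t1 t2 => DApp (db ctx t1) (db ctx t2)
  end.

Definition alpha (t u : term) : Prop := db [::] t = db [::] u.

Fixpoint tvars (t : term) : seq nat :=
  match t with
  | Var x => [:: x]
  | Lam x b => x :: tvars b
  | App t1 t2 => tvars t1 ++ tvars t2
  end.

Fixpoint bvars (t : term) : seq nat :=
  match t with
  | Var _ => [::]
  | Lam x b => x :: bvars b
  | App t1 t2 => bvars t1 ++ bvars t2
  end.

Definition evars (E : env) : seq nat :=
  flatten (map (fun es => es.1 :: tvars es.2) E).

Definition pvars (p : program) : seq nat := tvars p.1 ++ evars p.2.

Inductive tctx : Type :=
| Hole : tctx
| CAppL : tctx -> term -> tctx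
| CAppR : term -> tctx -> tctx.

Fixpoint tplug (C : tctx) (t : term) : term :=
  match C with
  | Hole => t
  | CAppL C' u => App (tplug C' t) u
  | CAppR u C' => App u (tplug C' t)
  end.

Fixpoint cvars (C : tctx) : seq nat :=
  match C with
  | Hole => [::]
  | CAppL C' u => cvars C' ++ tvars u
  | CAppR u C' => tvars u ++ cvars C'
  end.

Inductive is_H : tctx -> Prop :=
| isH_hole : is_H Hole
| isH_appl : forall C t, is_H C -> is_H (CAppL C t)
| isH_appr : forall i C, inert i -> is_H C -> is_H (CAppR i C).

Inductive is_Hat : tctx -> Prop :=
| isHat_base : forall t, is_Hat (CAppL Hole t)
| isHat_appl : forall C t, is_Hat C -> is_Hat (CAppL C t)
| isHat_appr : forall i C, inert i -> is_Hat C -> is_Hat (CAppR i C).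

(* program contexts  P ::= (C, E) | (t, G)  with
   G ::= E[x<-C] | G[x<-u];  every G is of the form  E1[x<-C]E2.
   PC C E          represents (C, E);
   PG t E1 x C E2  represents (t, E1[x<-C]E2). *)
Inductive pctx : Type :=
| PC : tctx -> env -> pctx
| PG : term -> env -> nat -> tctx -> env -> pctx.

Definition pctx_app (P : pctx) (x : nat) (u : term) : pctx :=
  match P with
  | PC C E => PC C (rcons E (x, u))
  | PG t E1 y C E2 => PG t E1 y C (rcons E2 (x, u))
  end.

Definition prog_app_ctx (p : program) (x : nat) (C : tctx) : pctx :=
  PG p.1 p.2 x C [::].

Definition pplugp (P : pctx) (q : program) : program :=
  match P with
  | PC C E => (tplug C q.1, q.2 ++ E)
  | PG u E1 x C E2 => (u, rcons E1 (x, tplug C q.1) ++ q.2 ++ E2)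
  end.

Definition pplug (P : pctx) (t : term) : program := pplugp P (t, [::]).

Definition lookup (P : pctx) (x : nat) (t : term) : Prop :=
  match P with
  | PC _ E => List.In (x, t) E
  | PG _ E1 _ _ E2 => List.In (x, t) (E1 ++ E2)
  end.

Definition pctx_vars (P : pctx) : seq nat :=
  match P with
  | PC C E => cvars C ++ evars E
  | PG u E1 x C E2 => tvars u ++ evars E1 ++ x :: cvars C ++ evars E2
  end.

Fixpoint an (t : term) : {fset nat} :=
  match t with
  | Var _ => fset0
  | Lam _ _ => fset0
  | App (Var x) u => [fset x] `|` an u
  | App t1 u => an t1 `|` an u
  end.

Fixpoint un (t : term) : {fset nat} :=
  match t with
  | Var x => [fset x]
  | Lam _ _ => fset0
  | App (Var _) u => un u
  | App t1 u => un t1 `|` un u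
  end.

Fixpoint anC (C : tctx) : {fset nat} :=
  match C with
  | Hole => fset0
  | CAppL C' _ => anC C'
  | CAppR i C' => an i `|` anC C'
  end.

Fixpoint unC (C : tctx) : {fset nat} :=
  match C with
  | Hole => fset0
  | CAppL C' _ => unC C'
  | CAppR i C' => un i `|` unC C'
  end.

Definition upd (S : {fset nat}) (x y : nat) : {fset nat} :=
  if x \in S then (S `\ x) `|` [fset y] else S.

Inductive Mctx : {fset nat} -> {fset nat} -> pctx -> Prop :=
| M_ax : forall C, is_H C -> Mctx (unC C) (anC C) (PC C [::])
| M_var : forall U A P x y, Mctx U A P -> x \in U `|` A ->
    Mctx (upd U x y) (upd A x y) (pctx_app P x (Var y))
| M_gc : forall U A P x t, Mctx U A P -> x \notin U `|` A ->
    Mctx U A (pctx_app P x t)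
| M_I : forall U A P x i, Mctx U A P -> x \in U `|` A -> inert_plus i ->
    Mctx ((U `\ x) `|` un i) ((A `\ x) `|` an i) (pctx_app P x i)
| M_U : forall U A P x v, Mctx U A P -> x \in U -> x \notin A -> is_value v ->
    Mctx (U `\ x) A (pctx_app P x v)
| M_her : forall U A P x C, Mctx U A P -> x \notin U `|` A -> is_H C ->
    Mctx (U `|` unC C) (A `|` anC C) (prog_app_ctx (pplug P (Var x)) x C).

Inductive Xctx : nat -> {fset nat} -> {fset nat} -> pctx -> Prop :=
| X_ax1 : forall C, is_Hat C -> Xctx 0 (unC C) (anC C) (PC C [::])
| X_ax2 : forall U A P x C, Mctx U A P -> x \notin U `|` A -> is_Hat C ->
    Xctx 0 ((U `\ x) `|` unC C) (A `|` anC C)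
         (prog_app_ctx (pplug P (Var x)) x C)
| X_var : forall n U A P x y, Xctx n U A P -> x \in U `|` A ->
    Xctx n (upd U x y) (upd A x y) (pctx_app P x (Var y))
| X_I : forall n U A P x i, Xctx n U A P -> x \in U `|` A -> inert_plus i ->
    Xctx n ((U `\ x) `|` un i) ((A `\ x) `|` an i) (pctx_app P x i)
| X_gc : forall n U A P x t, Xctx n U A P -> x \notin U `|` A ->
    Xctx n U A (pctx_app P x t)
| X_U : forall n U A P x v, Xctx n U A P -> x \in U -> x \notin A ->
    is_value v -> Xctx n (U `\ x) A (pctx_app P x v)
| X_NA : forall n U A P x, Xctx n U A P -> x \notin A ->
    Xctx n.+1 (U `\ x) A (prog_app_ctx (pplug P (Var x)) x Hole).

Definition inX (U A : {fset nat}) (P : pctx) : Prop := exists n, Xctx n U A P.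

Definition fresh_copy (p : program) (v v' : term) : Prop :=
  alpha v v' /\ (forall z, z \in bvars v' -> z \notin pvars p).

Definition ue_step (P : pctx) (p q : program) : Prop :=
  exists x v v', p = pplug P (Var x) /\ lookup P x v /\ is_value v /\
    fresh_copy p v v' /\ q = pplug P v'.

Definition um_step (P : pctx) (p q : program) : Prop :=
  exists x t u, p = pplug P (App (Lam x t) u) /\ x \notin pctx_vars P /\
    q = pplugp P (t, [:: (x, u)]).

From mathcomp Require Import all_boot finmap.
From Stdlib Require List.

Set Implicit Arguments.
Unset Strict Implicit.
Unset Printing Implicit Defensive.

(* Generalise from the fresh copy v' to any value w with fresh binders plugged
   into P, and induct on the derivation of P in X_{U,A}.  Appending an explicit
   substitution commutes with the whole reduction.  In the axioms, the hole of
   the applicative context H<<.> a> receives w = \y.b, so the redex w a fires in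
   the multiplicative context H (obtained by (her) for (ax2)).  For (NA),
   P<w> = (P'@[x<-w])<x>: one ue-step replaces x by a fresh copy of w, and
   P'@[x<-w] is again exponential, by (U) or (gc), with the same number of (NA)
   rules, so the induction hypothesis applies to it. *)

(* Binders are renamed through the nameless representation: the binder at
   depth k is called N + k, so all binders lie above the names below N. *)
Definition scope (N k : nat) : seq nat := rev (iota N k).

Lemma scopeS N k : scope N k.+1 = N + k :: scope N k.
Proof. by rewrite /scope -addn1 iotaD rev_cat. Qed.

Fixpoint named_of_db (N k : nat) (d : dbterm) : term :=
  match d with
  | DFree z => Var z
  | DBnd i => Var (nth 0 (scope N k) i)
  | DLam b => Lam (N + k) (named_of_db N k.+1 b)
  | DApp a b => App (named_of_db N k a) (named_of_db N k b)
  end.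

Fixpoint db_wf (N k : nat) (d : dbterm) : bool :=
  match d with
  | DFree z => z < N
  | DBnd i => i < k
  | DLam b => db_wf N k.+1 b
  | DApp a b => db_wf N k a && db_wf N k b
  end.

Lemma db_named_of_db N k d : db_wf N k d -> db (scope N k) (named_of_db N k d) = d.
Proof.
elim: d k => [z|i|b IHb|a IHa b IHb] k /=.
- move=> ltzN; rewrite mem_rev mem_iota.
  by case: ifP => // /andP[leNz _]; move: (leq_trans ltzN leNz); rewrite ltnn.
- have size_scope : size (scope N k) = k by rewrite size_rev size_iota.
  have uniq_scope : uniq (scope N k) by rewrite rev_uniq iota_uniq.
  by move=> ltik; rewrite mem_nth ?size_scope // index_uniq ?size_scope.
- by rewrite -scopeS => /IHb ->.
- by move=> /andP[/IHa -> /IHb ->].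
Qed.

Lemma db_wf_db N ctx t : {in tvars t, forall y, y < N} -> db_wf N (size ctx) (db ctx t).
Proof.
elim: t ctx => [y|y b IHb|a IHa b IHb] ctx /= ltN.
- case: ifP => [yctx|_] /=; first by rewrite index_mem.
  by rewrite ltN ?mem_head.
- by apply: (IHb (y :: ctx)) => z zb; rewrite ltN // inE zb orbT.
- by rewrite IHa ?IHb // => z zt; rewrite ltN // mem_cat zt ?orbT.
Qed.

Lemma bvars_named_of_db N k d : {in bvars (named_of_db N k d), forall y, N <= y}.
Proof.
elim: d k => [z|i|b IHb|a IHa b IHb] k y //=.
- by rewrite inE => /orP[/eqP->|/IHb //]; rewrite leq_addr.
- by rewrite mem_cat => /orP[/IHa|/IHb].
Qed.

Lemma exists_fresh_alpha t (S : seq nat) :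
  exists t', alpha t t' /\ forall z, z \in bvars t' -> z \notin S.
Proof.
set N := (\max_(y <- tvars t ++ S) y).+1.
have ltN y : y \in tvars t ++ S -> y < N by move=> ytS; rewrite ltnS leq_bigmax_seq.
exists (named_of_db N 0 (db [::] t)); split.
  rewrite /alpha (db_named_of_db (k := 0)) //; apply: (db_wf_db [::]).
  by move=> y yt; rewrite ltN // mem_cat yt.
move=> z /bvars_named_of_db; apply: contraL => zS.
by rewrite -ltnNge ltN // mem_cat zS orbT.
Qed.

Lemma alpha_value v v' : alpha v v' -> is_value v -> is_value v'.
Proof. by case: v => // y b; case: v' => //= [z|a b']; rewrite /alpha /=; case: ifP. Qed.

Definition prog_app (p : program) (z : nat) (u : term) : program := (p.1, rcons p.2 (z, u)).

Lemma pplugp_app P z u q : pplugp (pctx_app P z u) q = prog_app (pplugp P q) z u.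
Proof. by case: P => [C E|t E1 y C E2]; rewrite /prog_app /= ?rcons_cat. Qed.

Lemma pplug_app P z u t : pplug (pctx_app P z u) t = prog_app (pplug P t) z u.
Proof. exact: pplugp_app. Qed.

Lemma pplug_NA P x w :
  pplug (prog_app_ctx (pplug P (Var x)) x Hole) w = pplug (pctx_app P x w) (Var x).
Proof. by rewrite pplug_app /prog_app /= cats0. Qed.

Lemma evars_cat E F : evars (E ++ F) = evars E ++ evars F.
Proof. by rewrite /evars map_cat flatten_cat. Qed.

Lemma evars_rcons E z u : evars (rcons E (z, u)) = evars E ++ z :: tvars u.
Proof. by rewrite -cats1 evars_cat /evars /= cats0. Qed.

Lemma pvars_prog_app p z u : pvars (prog_app p z u) = pvars p ++ z :: tvars u.
Proof. by rewrite /pvars /= evars_rcons catA. Qed.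

Lemma pctx_vars_app P z u : pctx_vars (pctx_app P z u) = pctx_vars P ++ z :: tvars u.
Proof. by case: P => [C E|t E1 y C E2]; rewrite /= evars_rcons -!catA /= -?catA. Qed.

Lemma cvars_tplug C t : {subset cvars C <= tvars (tplug C t)}.
Proof.
elim: C => [|C IHC u|u C IHC] //= y; rewrite !mem_cat.
  by case/orP=> [/IHC->|->]; rewrite ?orbT.
by case/orP=> [->|/IHC->]; rewrite ?orbT.
Qed.

Lemma pctx_vars_pplug P t : {subset pctx_vars P <= pvars (pplug P t)}.
Proof.
case: P => [C E|u E1 x C E2] y; rewrite /pvars /= ?evars_cat ?evars_rcons /= !mem_cat.
  by case/orP=> [/(cvars_tplug t)->|->]; rewrite ?orbT.
rewrite !inE !mem_cat.
by case/or4P=> [->|->|->|/orP[/(cvars_tplug t)->|->]]; rewrite ?orbT.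
Qed.

Lemma lookup_app P z u x v : lookup P x v -> lookup (pctx_app P z u) x v.
Proof.
by case: P => [C E|t E1 y C E2] /= xv; rewrite -cats1 ?catA; apply: List.in_or_app; left.
Qed.

Lemma lookup_app_last P z u : lookup (pctx_app P z u) z u.
Proof.
by case: P => [C E|t E1 y C E2] /=; rewrite -cats1 ?catA; apply: List.in_or_app; right; left.
Qed.

(* S collects the names of the explicit substitutions stripped off the end of
   the program, so that steps of the shorter program lift to the full one. *)
Definition ue_step_avoiding (S : seq nat) (P : pctx) (p q : program) : Prop :=
  exists x v v', [/\ p = pplug P (Var x), lookup P x v, is_value v, alpha v v'
    & q = pplug P v'] /\ forall z, z \in bvars v' -> z \notin pvars p ++ S.

Definition um_step_avoiding (S : seq nat) (P : pctx) (p q : program) : Prop :=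
  exists x t u, [/\ p = pplug P (App (Lam x t) u), x \notin pctx_vars P ++ S &
    q = pplugp P (t, [:: (x, u)])].

Lemma ue_step_avoiding_nil P p q : ue_step_avoiding [::] P p q -> ue_step P p q.
Proof.
case=> x [v [v' [[-> xv vval vv' ->] fresh]]].
exists x, v, v'; do !split=> //.
by move=> z /fresh; rewrite cats0.
Qed.

Lemma um_step_avoiding_nil P p q : um_step_avoiding [::] P p q -> um_step P p q.
Proof. by case=> x [t [u [-> fresh ->]]]; exists x, t, u; rewrite cats0 in fresh. Qed.

Lemma ue_step_avoiding_app S P z u p q :
  ue_step_avoiding (z :: tvars u ++ S) P p q ->
  ue_step_avoiding S (pctx_app P z u) (prog_app p z u) (prog_app q z u).
Proof.
case=> x [v [v' [[-> xv vval vv' ->] fresh]]].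
exists x, v, v'; rewrite !pplug_app pvars_prog_app -catA.
by split; [split=> //; apply: lookup_app|].
Qed.

Lemma um_step_avoiding_app S P z u p q :
  um_step_avoiding (z :: tvars u ++ S) P p q ->
  um_step_avoiding S (pctx_app P z u) (prog_app p z u) (prog_app q z u).
Proof.
case=> x [t [u' [-> fresh ->]]].
by exists x, t, u'; rewrite pplug_app pplugp_app pctx_vars_app -catA.
Qed.

Inductive ue_um_reduces (S : seq nat) (U A : {fset nat}) : nat -> program -> Prop :=
| ue_um_reduces_um Pm p r : Mctx U A Pm -> um_step_avoiding S Pm p r ->
    ue_um_reduces S U A 0 p
| ue_um_reduces_ue k Q p p' : inX U A Q -> ue_step_avoiding S Q p p' ->
    ue_um_reduces S U A k p' -> ue_um_reduces S U A k.+1 p.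

Lemma ue_um_reduces_app S U1 A1 U A z u k p :
  (forall Q, inX U1 A1 Q -> inX U A (pctx_app Q z u)) ->
  (forall Q, Mctx U1 A1 Q -> Mctx U A (pctx_app Q z u)) ->
  ue_um_reduces (z :: tvars u ++ S) U1 A1 k p ->
  ue_um_reduces S U A k (prog_app p z u).
Proof.
move=> closedX closedM; elim=> {k p} [Pm p r PmM um|k Q p p' QX ue _ IH].
  by apply: ue_um_reduces_um; [apply: closedM PmM | apply: um_step_avoiding_app um].
by apply: ue_um_reduces_ue IH; [apply: closedX QX | apply: ue_step_avoiding_app ue].
Qed.

Lemma ue_um_reduces_seq U A k p : ue_um_reduces [::] U A k p ->
  exists (r : program) (ps : nat -> program) (Ps : nat -> pctx) (Pm : pctx),
    ps 0 = p /\
    (forall i, i < k -> inX U A (Ps i) /\ ue_step (Ps i) (ps i) (ps i.+1)) /\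
    Mctx U A Pm /\ um_step Pm (ps k) r.
Proof.
elim=> {k p} [Pm p r PmM um|k Q p p' QX ue _ [r [ps [Ps [Pm [ps0 [steps [PmM um]]]]]]]].
  by exists r, (fun=> p), (fun=> Pm), Pm; do !split => //; apply: um_step_avoiding_nil.
exists r, (fun i => if i is i'.+1 then ps i' else p),
  (fun i => if i is i'.+1 then Ps i' else Q), Pm.
split=> //; split=> [[|i] ltik /=|//]; last exact: steps.
by split; [|apply: ue_step_avoiding_nil; rewrite ps0].
Qed.

Local Open Scope fset_scope.

Lemma Mctx_app_value U A P x w :
  Mctx U A P -> x \notin A -> is_value w -> Mctx (U `\ x) A (pctx_app P x w).
Proof.
move=> PM xA wval; have [xU|xU] := boolP (x \in U); first exact: M_U.
by rewrite mem_fsetD1 //; apply: M_gc PM _; rewrite in_fsetU negb_or xU.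
Qed.

Lemma Xctx_app_value n U A P x w :
  Xctx n U A P -> x \notin A -> is_value w -> Xctx n (U `\ x) A (pctx_app P x w).
Proof.
move=> PX xA wval; have [xU|xU] := boolP (x \in U); first exact: X_U.
by rewrite mem_fsetD1 //; apply: X_gc PX _; rewrite in_fsetU negb_or xU.
Qed.

Lemma is_Hat_split C : is_Hat C -> exists H a, [/\ is_H H,
  forall w, tplug C w = tplug H (App w a), unC H = unC C, anC H = anC C &
  {subset cvars H <= cvars C}].
Proof.
elim=> {C} [a|C t _ [H [a [HH plugH unH anH subH]]]
             |i C ii _ [H [a [HH plugH unH anH subH]]]].
- by exists Hole, a; split=> //; constructor.
- exists (CAppL H t), a; split=> /= [|w|||y]; rewrite ?plugH //; first by constructor.
  by rewrite !mem_cat => /orP[/subH->|->]; rewrite ?orbT.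
- exists (CAppR i H), a; split=> /= [|w|||y]; rewrite ?plugH ?unH ?anH //; first by constructor.
  by rewrite !mem_cat => /orP[->|/subH->]; rewrite ?orbT.
Qed.

Lemma subset_notin_cat (s1 s2 S : seq nat) y :
  {subset s1 <= s2} -> y \notin s2 ++ S -> y \notin s1 ++ S.
Proof. by move=> sub12; apply: contra; rewrite !mem_cat => /orP[/sub12->|->]; rewrite ?orbT. Qed.

Definition plug_value_reduces (k : nat) (U A : {fset nat}) (P : pctx) : Prop :=
  forall w S, is_value w -> (forall z, z \in bvars w -> z \notin pctx_vars P ++ S) ->
    ue_um_reduces S U A k (pplug P w).

Lemma plug_value_reduces_app k U1 A1 P U A z u :
  (forall n Q, Xctx n U1 A1 Q -> Xctx n U A (pctx_app Q z u)) ->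
  (forall Q, Mctx U1 A1 Q -> Mctx U A (pctx_app Q z u)) ->
  plug_value_reduces k U1 A1 P -> plug_value_reduces k U A (pctx_app P z u).
Proof.
move=> closedX closedM IH w S wval fresh; rewrite pplug_app.
apply: ue_um_reduces_app closedM _ => [Q [n QX]|]; first by exists n; apply: closedX.
by apply: IH => // y /fresh; rewrite pctx_vars_app -catA.
Qed.

Lemma plug_value_reduces_Hat C :
  is_Hat C -> plug_value_reduces 0 (unC C) (anC C) (PC C [::]).
Proof.
case/is_Hat_split=> H [a [HH plugH <- <- subH]] w S.
case: w => [z []|y b _|t1 t2 []] fresh.
apply: (ue_um_reduces_um (M_ax HH)).
exists y, b, a; split=> //; first by rewrite /pplug /= plugH.
by apply: subset_notin_cat (fresh y (mem_head _ _)) => z /=; rewrite !cats0; apply: subH.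
Qed.

Lemma plug_value_reduces_her U A P x C :
  Mctx U A P -> x \notin U `|` A -> is_Hat C ->
  plug_value_reduces 0 ((U `\ x) `|` unC C) (A `|` anC C)
    (prog_app_ctx (pplug P (Var x)) x C).
Proof.
move=> PM xUA /is_Hat_split [H [a [HH plugH <- <- subH]]] w S.
case: w => [z []|y b _|t1 t2 []] fresh.
have xU : x \notin U by move: xUA; rewrite in_fsetU negb_or => /andP[].
rewrite mem_fsetD1 //; apply: (ue_um_reduces_um (M_her PM xUA HH)).
exists y, b, a; split=> //; first by rewrite /pplug /= plugH.
apply: subset_notin_cat (fresh y (mem_head _ _)) => z /=.
rewrite !mem_cat !inE !mem_cat.
by case/or3P=> [->|->|/orP[->|/orP[/subH->|->]]]; rewrite ?orbT.
Qed.

Lemma plug_value_reduces_NA n U A P x :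
  Xctx n U A P -> x \notin A -> plug_value_reduces n U A P ->
  plug_value_reduces n.+1 (U `\ x) A (prog_app_ctx (pplug P (Var x)) x Hole).
Proof.
move=> PX xA IH w S wval _; rewrite pplug_NA.
set Q := pctx_app P x w.
have QX : Xctx n (U `\ x) A Q by exact: Xctx_app_value.
have IHQ : plug_value_reduces n (U `\ x) A Q.
  by apply: plug_value_reduces_app IH => [m R RX|R RM];
    [exact: Xctx_app_value | exact: Mctx_app_value].
have [w' [ww' fresh]] :=
  exists_fresh_alpha w ((pvars (pplug Q (Var x)) ++ S) ++ pctx_vars Q ++ S).
apply: (ue_um_reduces_ue (Q := Q) (p' := pplug Q w')); first by exists n.
  exists x, w, w'; split; first by split=> //; apply: lookup_app_last.
  by move=> z /fresh; rewrite mem_cat negb_or => /andP[].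
apply: IHQ; first exact: alpha_value ww' wval.
by move=> z /fresh; rewrite mem_cat negb_or => /andP[].
Qed.

Lemma Xctx_plug_value_reduces k U A P : Xctx k U A P -> plug_value_reduces k U A P.
Proof.
elim=> {k U A P}.
- exact: plug_value_reduces_Hat.
- exact: plug_value_reduces_her.
- move=> n U A P x y _ IH xUA; apply: plug_value_reduces_app IH => [m Q QX|Q QM];
    [exact: X_var QX xUA | exact: M_var QM xUA].
- move=> n U A P x i _ IH xUA ii; apply: plug_value_reduces_app IH => [m Q QX|Q QM];
    [exact: X_I QX xUA ii | exact: M_I QM xUA ii].
- move=> n U A P x t _ IH xUA; apply: plug_value_reduces_app IH => [m Q QX|Q QM];
    [exact: X_gc QX xUA | exact: M_gc QM xUA].
- move=> n U A P x v _ IH xU xA vval; apply: plug_value_reduces_app IH => [m Q QX|Q QM];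
    [exact: X_U QX xU xA vval | exact: M_U QM xU xA vval].
- move=> n U A P x PX IH xA; exact: plug_value_reduces_NA.
Qed.

Theorem mainTheorem6 (k : nat) (U A : {fset nat}) (P : pctx) (x : nat)
    (v v' : term) (p q : program) :
  (* P in X_{U,A}, via a derivation with exactly k rules (NA) *)
  Xctx k U A P ->
  (* P(x) = v *)
  lookup P x v -> is_value v ->
  (* p = P<x> ->ue P<v^alpha> = q *)
  p = pplug P (Var x) -> fresh_copy p v v' -> q = pplug P v' ->
  exists (r : program) (ps : nat -> program) (Ps : nat -> pctx) (Pm : pctx),
    ps 0 = q /\
    (forall i, i < k -> inX U A (Ps i) /\ ue_step (Ps i) (ps i) (ps i.+1)) /\
    Mctx U A Pm /\ um_step Pm (ps k) r.
Proof.
(* Of P(x) = v only the fact that v is a value matters. *)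
move=> PX _ vval -> [vv' fresh] ->.
apply: ue_um_reduces_seq.
apply: (Xctx_plug_value_reduces PX (alpha_value vv' vval)).
by move=> z /fresh; rewrite cats0; apply: contra; apply: pctx_vars_pplug.
Qed.
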